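(* Let $\mathcal{CS}$ be a variant closed constant specification for the basic system and $\mathcal{CS}(\mathbf V)$ its extension to $\mathit{Fml}_J(\mathbf V)$. For every basic formula $\varphi\in\mathit{Fml}_J$, if $\vdash_{\mathcal{CS}(\mathbf V)}\varphi$ then $\vdash_{\mathcal{CS}}\varphi$.
   Context: Syntax of FOLPb: terms $t::=p_i\mid c\mid t\cdot t\mid t+t\mid !t\mid\mathsf b(t)\mid\mathsf{gen}_x(t)$; formulas $Px_1\dots x_n\mid\bot\mid\varphi\to\varphi\mid\forall x\varphi\mid t{:}_X\varphi$ with $X$ a finite set of individual variables, $fv(t{:}_X\psi)=X$; $\mathit{Fml}_J$ is the set of these (basic) formulas. Axiom schemes: A1 classical first-order; A2 $t{:}_{Xy}\varphi\to t{:}_X\varphi$ ($y$ not free in $\varphi$); A3 $t{:}_X\varphi\to t{:}_{Xy}\varphi$; B1 $t{:}_X\varphi\to\varphi$; B2 $t{:}_X(\varphi\to\psi)\to(s{:}_X\varphi\to[t\cdot s]{:}_X\psi)$; B3 $t{:}_X\varphi\to[t+s]{:}_X\varphi$, $s{:}_X\varphi\to[t+s]{:}_X\varphi$; B4 $t{:}_X\varphi\to!t{:}_Xt{:}_X\varphi$; B5 $t{:}_X\varphi\to\mathsf{gen}_x(t){:}_X\forall x\varphi$ ($x\notin X$); Bb $\forall y\,t{:}_{Xy}\varphi(y)\to\mathsf b(t){:}_X\forall y\varphi(y)$; rules modus ponens and generalization. A constant specification $\mathcal{CS}$ is a set of $c{:}\psi$ with $\psi$ an axiom; $\vdash_{\mathcal{CS}}$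 is provability with $\mathcal{CS}$ added. $\mathcal{CS}$ is variant closed if $c{:}\varphi\in\mathcal{CS}\iff c{:}\psi\in\mathcal{CS}$ whenever $\varphi,\psi$ differ by a one-to-one onto renaming of free individual variables. Henkin language: $\mathbf V$ is a countable set of new witness variables, which may occur free (as predicate arguments and in subscript sets) but are never quantified nor used as $\mathsf{gen}$ subscripts; $\mathit{Fml}_J(\mathbf V)$ is the set of such Henkin formulas. $\mathcal{CS}(\mathbf V)$ is the set of all $c{:}\psi$ with $c{:}\varphi\in\mathcal{CS}$ and $\psi$ obtained from $\varphi$ by replacing some free basic variables by distinct witness variables. $\vdash_{\mathcal{CS}(\mathbf V)}$ is provability over $\mathit{Fml}_J(\mathbf V)$ with the same axiom schemes and rules and $\mathcal{CS}(\mathbf V)$ as additional axioms. *)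

From Stdlib Require Import List Arith Bool Sorted.
Import ListNotations.

(* BV n : basic individual variable x_n;  WV n : witness variable v_n *)
Inductive var : Type := BV (n : nat) | WV (n : nat).

Definition var_eqb (a b : var) : bool :=
  match a, b with
  | BV m, BV n => Nat.eqb m n
  | WV m, WV n => Nat.eqb m n
  | _, _ => false
  end.

Definition inb (v : var) (X : list var) : bool := existsb (var_eqb v) X.

(* a fixed strict linear order on variables, used to represent finite sets of
   variables canonically as strictly increasing lists *)
Definition vcode (v : var) : nat :=
  match v with BV n => 2 * n | WV n => 2 * n + 1 end.

Fixpoint vins (y : var) (X : list var) : list var :=
  match X with
  | [] => [y]
  | z :: Z => if Nat.ltb (vcode y) (vcode z) then y :: z :: Z
              else if Nat.eqb (vcode y) (vcode z) then z :: Z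
              else z :: vins y Z
  end.

Definition sortset (l : list var) : list var := fold_right vins [] l.

Definition wfset (X : list var) : Prop :=
  Sorted (fun a b => vcode a < vcode b) X.

(* JVar i = p_i, JConst c = c, JApp = ·, JSum = +, JBang = !, JB = b,
   JGen x t = gen_x(t) with x a basic variable (witnesses never occur here) *)
Inductive jterm : Type :=
| JVar (i : nat)
| JConst (c : nat)
| JApp (s t : jterm)
| JSum (s t : jterm)
| JBang (t : jterm)
| JB (t : jterm)
| JGen (x : nat) (t : jterm).

(* Pred P xs : P x1 ... xn ;  All x φ quantifies the basic variable x_x only;
   Just t X φ : t :_X φ, X a finite set of variables (canonical list). *)
Inductive form : Type :=
| Pred (P : nat) (args : list var)
| Bot
| Imp (φ ψ : form)
| All (x : nat) (φ : form)
| Just (t : jterm) (X : list var) (φ : form).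

Fixpoint fv (φ : form) : list var :=
  match φ with
  | Pred _ l => l
  | Bot => []
  | Imp a b => fv a ++ fv b
  | All x a => filter (fun v => negb (var_eqb v (BV x))) (fv a)
  | Just _ X _ => X
  end.

Fixpoint wf (φ : form) : Prop :=
  match φ with
  | Pred _ _ | Bot => True
  | Imp a b => wf a /\ wf b
  | All _ a => wf a
  | Just _ X a => wfset X /\ wf a
  end.

Definition is_basic_var (v : var) : Prop :=
  match v with BV _ => True | WV _ => False end.

Fixpoint basic (φ : form) : Prop :=
  match φ with
  | Pred _ l => Forall is_basic_var l
  | Bot => True
  | Imp a b => basic a /\ basic b
  | All _ a => basic a
  | Just _ X a => Forall is_basic_var X /\ basic a
  end.

Definition FmlJV (φ : form) : Prop := wf φ.
Definition FmlJ (φ : form) : Prop := wf φ /\ basic φ.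

Definition upd (f : var -> var) (x : nat) : var -> var :=
  fun v => if var_eqb v (BV x) then v else f v.

Fixpoint ren (f : var -> var) (φ : form) : form :=
  match φ with
  | Pred P l => Pred P (map f l)
  | Bot => Bot
  | Imp a b => Imp (ren f a) (ren f b)
  | All x a => All x (ren (upd f x) a)
  | Just t X a =>
      Just t (sortset (map f X)) (ren (fun v => if inb v X then f v else v) a)
  end.

(* the replacement f is free (capture-avoiding) for φ *)
Fixpoint ren_ok (f : var -> var) (φ : form) : Prop :=
  match φ with
  | Pred _ _ | Bot => True
  | Imp a b => ren_ok f a /\ ren_ok f b
  | All x a => ren_ok (upd f x) a /\
               (forall v, In v (fv (All x a)) -> f v <> BV x)
  | Just t X a =>
      ren_ok (fun v => if inb v X then f v else v) a /\
      (forall v w, In v X -> In v (fv a) -> In w (fv a) -> ~ In w X ->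
                   f v <> w)
  end.

Definition sub1 (x : nat) (y : var) : var -> var :=
  fun v => if var_eqb v (BV x) then y else v.

(* propositional tautology instances: valid under every assignment of truth
   values to the non-propositional (atomic, quantified, justification)
   subformulas *)
Fixpoint peval (val : form -> bool) (φ : form) : bool :=
  match φ with
  | Bot => false
  | Imp a b => implb (peval val a) (peval val b)
  | _ => val φ
  end.

Definition taut (φ : form) : Prop := forall val, peval val φ = true.

Inductive axiom : form -> Prop :=
| ax_taut φ : taut φ -> axiom φ
| ax_inst x φ y : ren_ok (sub1 x y) φ -> axiom (Imp (All x φ) (ren (sub1 x y) φ))
| ax_allimp x φ ψ : ~ In (BV x) (fv φ) ->
    axiom (Imp (All x (Imp φ ψ)) (Imp φ (All x ψ)))
| ax_A2 t X y φ : ~ In y X -> ~ In y (fv φ) ->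
    axiom (Imp (Just t (vins y X) φ) (Just t X φ))
| ax_A3 t X y φ : ~ In y X ->
    axiom (Imp (Just t X φ) (Just t (vins y X) φ))
| ax_B1 t X φ : axiom (Imp (Just t X φ) φ)
| ax_B2 t s X φ ψ :
    axiom (Imp (Just t X (Imp φ ψ)) (Imp (Just s X φ) (Just (JApp t s) X ψ)))
| ax_B3l t s X φ : axiom (Imp (Just t X φ) (Just (JSum t s) X φ))
| ax_B3r t s X φ : axiom (Imp (Just s X φ) (Just (JSum t s) X φ))
| ax_B4 t X φ : axiom (Imp (Just t X φ) (Just (JBang t) X (Just t X φ)))
| ax_B5 t X x φ : ~ In (BV x) X ->
    axiom (Imp (Just t X φ) (Just (JGen x t) X (All x φ)))
| ax_Bb t X y φ : ~ In (BV y) X ->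
    axiom (Imp (All y (Just t (vins (BV y) X) φ)) (Just (JB t) X (All y φ))).

(* a constant specification: CS c ψ means c:ψ ∈ CS; here c:ψ is c:_∅ ψ *)
Definition cs_formula (c : nat) (ψ : form) : form := Just (JConst c) [] ψ.

Definition is_CS (CS : nat -> form -> Prop) : Prop :=
  forall c ψ, CS c ψ -> FmlJ ψ /\ axiom ψ.

Definition lift_ren (σ : nat -> nat) : var -> var :=
  fun v => match v with BV n => BV (σ n) | WV n => WV n end.

Definition variant (φ ψ : form) : Prop :=
  exists σ : nat -> nat,
    (exists σ', (forall n, σ' (σ n) = n) /\ (forall n, σ (σ' n) = n)) /\
    ren_ok (lift_ren σ) φ /\ ψ = ren (lift_ren σ) φ.

Definition variant_closed (CS : nat -> form -> Prop) : Prop :=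
  forall c φ ψ, variant φ ψ -> (CS c φ <-> CS c ψ).

(* CS(V): replace some free basic variables (those selected by P) by distinct
   witness variables (BV n ↦ WV (τ n), τ injective) *)
Definition wit_ren (P : nat -> bool) (τ : nat -> nat) : var -> var :=
  fun v => match v with
           | BV n => if P n then WV (τ n) else BV n
           | WV n => WV n
           end.

Definition CSV (CS : nat -> form -> Prop) (c : nat) (ψ : form) : Prop :=
  exists φ (P : nat -> bool) (τ : nat -> nat),
    CS c φ /\ (forall m n, τ m = τ n -> m = n) /\
    ren_ok (wit_ren P τ) φ /\ ψ = ren (wit_ren P τ) φ.

Inductive prov (L : form -> Prop) (CS : nat -> form -> Prop) : form -> Prop :=
| pr_ax φ : L φ -> axiom φ -> prov L CS φ
| pr_cs c ψ : CS c ψ -> L (cs_formula c ψ) -> prov L CS (cs_formula c ψ)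
| pr_mp φ ψ : prov L CS (Imp φ ψ) -> prov L CS φ -> prov L CS ψ
| pr_gen x φ : prov L CS φ -> prov L CS (All x φ).

Definition provCS (CS : nat -> form -> Prop) (φ : form) : Prop :=
  prov FmlJ CS φ.
Definition provCSV (CS : nat -> form -> Prop) (φ : form) : Prop :=
  prov FmlJV (CSV CS) φ.

(* A derivation over the Henkin language uses only finitely many
   variables, so for N large enough all basic variables occurring in it
   (free or bound) are below N.  The involution [swap N] on variables fixes
   the basic variables x_n with n < N and exchanges the witness variable v_k
   with the basic variable x_(N+k).  Applying it everywhere to a formula
   ([swap_form N]) turns every Henkin formula into a basic formula and
   leaves basic formulas below N unchanged.  We show that it maps
   - axiom instances to axiom instances (it commutes with renamings up to
     conjugation, and preserves freshness side conditions), and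
   - CS(V)-instances c:ψ to CS-instances: ψ arises from some c:φ ∈ CS by a
     witness renaming, and swapping back gives a one-to-one renaming of
     basic variables, so variant closure of CS applies;
   while it commutes with modus ponens and generalization.  Translating a
   CS(V)-derivation of a basic φ thus yields a CS-derivation of φ itself. *)

From Stdlib Require Import List Arith Bool Sorted Lia FunctionalExtensionality.
Import ListNotations.

(* ** Canonical finite sets of variables *)

Definition vlt (a b : var) : Prop := vcode a < vcode b.

Lemma vcode_inj a b : vcode a = vcode b -> a = b.
Proof. destruct a, b; simpl; intro; f_equal; lia. Qed.

Lemma var_eqb_spec a b : var_eqb a b = true <-> a = b.
Proof.
  destruct a, b; simpl; split; intro H; try discriminate;
    try (apply Nat.eqb_eq in H; subst; reflexivity);
    try (inversion H; subst; apply Nat.eqb_refl).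
Qed.

Lemma var_eqb_refl v : var_eqb v v = true.
Proof. apply var_eqb_spec; reflexivity. Qed.

Lemma inb_In v X : inb v X = true <-> In v X.
Proof.
  unfold inb. rewrite existsb_exists. split.
  - intros [x [Hx He]]. apply var_eqb_spec in He. subst; auto.
  - intros H. exists v. split; auto. apply var_eqb_refl.
Qed.

Lemma In_vins v y X : In v (vins y X) <-> v = y \/ In v X.
Proof.
  induction X as [|z Z IH]; simpl.
  - split; intros [H|H]; auto.
  - destruct (Nat.ltb (vcode y) (vcode z)) eqn:Elt; simpl.
    + split; intros [H|H]; auto.
    + destruct (Nat.eqb (vcode y) (vcode z)) eqn:Eeq; simpl.
      * apply Nat.eqb_eq, vcode_inj in Eeq. subst.
        split; intros H; [auto | destruct H as [H|H]; auto].
      * rewrite IH. split; intros [H|H]; auto; destruct H; auto.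
Qed.

Lemma vins_sorted y X : StronglySorted vlt X -> StronglySorted vlt (vins y X).
Proof.
  induction X as [|z Z IH]; simpl; intro H.
  - repeat constructor.
  - inversion H as [|? ? HZ Hz]; subst. unfold vlt in *.
    destruct (Nat.ltb (vcode y) (vcode z)) eqn:Elt.
    + apply Nat.ltb_lt in Elt. constructor; auto. constructor; [exact Elt|].
      rewrite Forall_forall in *. intros w Hw. specialize (Hz w Hw). lia.
    + destruct (Nat.eqb (vcode y) (vcode z)) eqn:Eeq; auto.
      apply Nat.ltb_ge in Elt. apply Nat.eqb_neq in Eeq.
      constructor; auto. rewrite Forall_forall in *. intros w Hw.
      apply In_vins in Hw. destruct Hw as [->|Hw]; auto. lia.
Qed.

Lemma sortset_sorted l : StronglySorted vlt (sortset l).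
Proof. induction l; simpl; [constructor | apply vins_sorted; auto]. Qed.

Lemma In_sortset v l : In v (sortset l) <-> In v l.
Proof. induction l; simpl; [tauto|]. rewrite In_vins, IHl. firstorder. Qed.

Lemma sorted_set_ext l1 l2 : StronglySorted vlt l1 -> StronglySorted vlt l2 ->
  (forall v, In v l1 <-> In v l2) -> l1 = l2.
Proof.
  revert l2; induction l1 as [|a l1 IH]; intros [|b l2] H1 H2 Hm.
  - reflexivity.
  - exfalso. apply (Hm b). left; auto.
  - exfalso. apply (Hm a). left; auto.
  - inversion H1 as [|? ? S1 F1]; inversion H2 as [|? ? S2 F2]; subst.
    rewrite Forall_forall in F1, F2. unfold vlt in *.
    assert (a = b) as <-.
    { destruct (proj1 (Hm a) (or_introl eq_refl)) as [|Ha]; auto.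
      destruct (proj2 (Hm b) (or_introl eq_refl)) as [|Hb]; auto.
      specialize (F1 _ Hb). specialize (F2 _ Ha). lia. }
    f_equal. apply IH; auto. intro v. split; intro Hv.
    + destruct (proj1 (Hm v) (or_intror Hv)) as [->|]; auto.
      specialize (F1 _ Hv). lia.
    + destruct (proj2 (Hm v) (or_intror Hv)) as [->|]; auto.
      specialize (F2 _ Hv). lia.
Qed.

Lemma wfset_sortset X : wfset X -> sortset X = X.
Proof.
  intro H. apply sorted_set_ext; [apply sortset_sorted| |].
  - apply Sorted_StronglySorted; auto. intros a b c; unfold vlt; lia.
  - intro v; apply In_sortset.
Qed.

(* ** The swap of witness variables with high basic variables *)

Definition swap (N : nat) (v : var) : var :=
  match v with
  | BV n => if Nat.ltb n N then BV n else WV (n - N)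
  | WV n => BV (N + n)
  end.

Lemma swap_involutive N v : swap N (swap N v) = v.
Proof.
  destruct v as [n|n]; simpl.
  - destruct (Nat.ltb n N) eqn:E; simpl; [rewrite E; auto|].
    apply Nat.ltb_ge in E. f_equal; lia.
  - destruct (Nat.ltb (N + n) N) eqn:E; [apply Nat.ltb_lt in E; lia|].
    f_equal; lia.
Qed.

Lemma swap_low N x : x < N -> swap N (BV x) = BV x.
Proof. intro H; simpl. apply Nat.ltb_lt in H. rewrite H; auto. Qed.

Lemma swap_eq N v w : swap N v = w <-> v = swap N w.
Proof. split; intro H; subst; rewrite swap_involutive; auto. Qed.

(* The swap extended to formulas; binders x are kept, which is harmless for
   formulas whose variables are all below N (see [below]). *)
Fixpoint swap_form (N : nat) (φ : form) : form :=
  match φ with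
  | Pred P l => Pred P (map (swap N) l)
  | Bot => Bot
  | Imp a b => Imp (swap_form N a) (swap_form N b)
  | All x a => All x (swap_form N a)
  | Just t X a => Just t (sortset (map (swap N) X)) (swap_form N a)
  end.

Definition var_below (N : nat) (v : var) : Prop :=
  match v with BV n => n < N | WV _ => True end.

Fixpoint below (N : nat) (φ : form) : Prop :=
  match φ with
  | Pred _ l => Forall (var_below N) l
  | Bot => True
  | Imp a b => below N a /\ below N b
  | All x a => x < N /\ below N a
  | Just _ X a => Forall (var_below N) X /\ below N a
  end.

Lemma var_below_mono N M v : N <= M -> var_below N v -> var_below M v.
Proof. destruct v; simpl; auto. lia. Qed.

Lemma below_mono N M φ : N <= M -> below N φ -> below M φ.
Proof.
  intro HNM. induction φ; simpl; intros; try tauto.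
  - eapply Forall_impl; [|eauto]. intros; eapply var_below_mono; eauto.
  - destruct H; split; auto. lia.
  - destruct H; split; auto.
    eapply Forall_impl; [|eauto]. intros; eapply var_below_mono; eauto.
Qed.

Lemma list_below_exists (l : list var) : exists N, Forall (var_below N) l.
Proof.
  induction l as [|v l [N HN]].
  - exists 0; auto.
  - destruct v as [n|n].
    + exists (max N (S n)). constructor; [simpl; lia|].
      eapply Forall_impl; [|eauto]. intros; eapply var_below_mono; [|eauto]; lia.
    + exists N. constructor; simpl; auto.
Qed.

Lemma below_exists φ : exists N, below N φ.
Proof.
  induction φ as [P l| |a [N1 H1] b [N2 H2]|x a [N H]|t X a [N1 H1]]; simpl.
  - apply list_below_exists.
  - exists 0; auto.
  - exists (max N1 N2).
    split; [apply (below_mono N1) | apply (below_mono N2)]; auto; lia.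
  - exists (max N (S x)). split; [lia | apply (below_mono N); auto; lia].
  - destruct (list_below_exists X) as [N2 H2]. exists (max N1 N2). split.
    + eapply Forall_impl; [|eauto]. intros; eapply var_below_mono; [|eauto]; lia.
    + apply (below_mono N1); auto; lia.
Qed.

Lemma in_map_swap N v l : In v (map (swap N) l) <-> In (swap N v) l.
Proof.
  rewrite in_map_iff. split.
  - intros [x [<- Hx]]. rewrite swap_involutive; auto.
  - intros H. exists (swap N v). rewrite swap_involutive; auto.
Qed.

Lemma in_swap_set N v X : In v (sortset (map (swap N) X)) <-> In (swap N v) X.
Proof. rewrite In_sortset. apply in_map_swap. Qed.

Lemma inb_swap_set N v X : inb v (sortset (map (swap N) X)) = inb (swap N v) X.
Proof.
  apply eq_true_iff_eq. rewrite !inb_In. apply in_swap_set.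
Qed.

Lemma swap_vins N y X :
  sortset (map (swap N) (vins y X)) = vins (swap N y) (sortset (map (swap N) X)).
Proof.
  apply sorted_set_ext; [apply sortset_sorted | apply vins_sorted, sortset_sorted|].
  intro v. rewrite in_swap_set, !In_vins, in_swap_set, swap_eq. tauto.
Qed.

Lemma var_eqb_swap N x v : x < N -> var_eqb (swap N v) (BV x) = var_eqb v (BV x).
Proof.
  intro Hx. apply eq_true_iff_eq. rewrite !var_eqb_spec, swap_eq, swap_low; tauto.
Qed.

Lemma fv_swap_form N φ v :
  below N φ -> (In v (fv (swap_form N φ)) <-> In (swap N v) (fv φ)).
Proof.
  revert v; induction φ as [P l| |a IHa b IHb|x a IH|t X a IH]; intros v Hb;
    simpl in *.
  - apply in_map_swap.
  - tauto.
  - destruct Hb. rewrite !in_app_iff, IHa, IHb; tauto.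
  - destruct Hb as [Hx Hb]. rewrite !filter_In, IH, var_eqb_swap; tauto.
  - apply in_swap_set.
Qed.

Lemma fv_below N φ v : below N φ -> In v (fv φ) -> var_below N v.
Proof.
  revert v; induction φ as [P l| |a IHa b IHb|x a IH|t X a IH]; intros v Hb Hv;
    simpl in *.
  - rewrite Forall_forall in Hb; auto.
  - tauto.
  - destruct Hb. apply in_app_iff in Hv. destruct Hv; eauto.
  - apply filter_In in Hv. destruct Hb, Hv; eauto.
  - destruct Hb as [Hb _]. rewrite Forall_forall in Hb; auto.
Qed.

Lemma fv_basic φ v : basic φ -> In v (fv φ) -> is_basic_var v.
Proof.
  revert v; induction φ as [P l| |a IHa b IHb|x a IH|t X a IH]; intros v Hb Hv;
    simpl in *.
  - rewrite Forall_forall in Hb; auto.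
  - tauto.
  - destruct Hb. apply in_app_iff in Hv. destruct Hv; eauto.
  - apply filter_In in Hv. destruct Hv; eauto.
  - destruct Hb as [Hb _]. rewrite Forall_forall in Hb; auto.
Qed.

Lemma swap_var_basic N v : var_below N v -> is_basic_var (swap N v).
Proof. destruct v; simpl; auto. intro H. apply Nat.ltb_lt in H. rewrite H; simpl; auto. Qed.

Lemma swap_set_basic N X :
  Forall (var_below N) X -> Forall is_basic_var (map (swap N) X).
Proof.
  rewrite !Forall_forall. intros H v Hv. apply in_map_swap in Hv.
  rewrite <- (swap_involutive N v). apply swap_var_basic; auto.
Qed.

Lemma swap_form_FmlJ N φ : below N φ -> FmlJ (swap_form N φ).
Proof.
  unfold FmlJ. induction φ as [P l| |a IHa b IHb|x a IH|t X a IH]; intros Hb;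
    simpl in *.
  - split; auto. apply swap_set_basic; auto.
  - auto.
  - destruct Hb. destruct IHa, IHb; auto.
  - destruct Hb. destruct IH; auto.
  - destruct Hb as [HX Hb]. destruct IH; auto. repeat split; auto.
    + apply StronglySorted_Sorted, sortset_sorted.
    + pose proof (swap_set_basic N X HX) as Hbas. rewrite Forall_forall in *.
      intros v Hv. apply Hbas, In_sortset, Hv.
Qed.

Lemma swap_fix N v : var_below N v -> is_basic_var v -> swap N v = v.
Proof. destruct v; simpl; try tauto. intros H _. apply Nat.ltb_lt in H. rewrite H; auto. Qed.

Lemma map_swap_fix N l :
  Forall (var_below N) l -> Forall is_basic_var l -> map (swap N) l = l.
Proof.
  induction l; simpl; auto. intros H1 H2. inversion H1; inversion H2; subst.
  f_equal; auto. apply swap_fix; auto.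
Qed.

Lemma swap_form_fix N φ : below N φ -> FmlJ φ -> swap_form N φ = φ.
Proof.
  unfold FmlJ. induction φ as [P l| |a IHa b IHb|x a IH|t X a IH];
    intros Hb [Hw Hbas]; simpl in *.
  - f_equal. apply map_swap_fix; auto.
  - auto.
  - destruct Hb, Hw, Hbas. f_equal; auto.
  - destruct Hb. f_equal; auto.
  - destruct Hb, Hw, Hbas. f_equal; auto.
    rewrite map_swap_fix; auto. apply wfset_sortset; auto.
Qed.

(* ** Renamings under the swap *)

Lemma ren_ext_fv f g φ :
  (forall v, In v (fv φ) -> f v = g v) -> ren f φ = ren g φ.
Proof.
  revert f g; induction φ as [P l| |a IHa b IHb|x a IH|t X a IH]; intros f g H;
    simpl in *.
  - f_equal. apply map_ext_in; auto.
  - auto.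
  - f_equal; [apply IHa | apply IHb]; intros; apply H; apply in_app_iff; auto.
  - f_equal. apply IH. intros v Hv. unfold upd.
    destruct (var_eqb v (BV x)) eqn:E; auto. apply H, filter_In. rewrite E; auto.
  - f_equal; [f_equal; apply map_ext_in; auto|].
    apply IH. intros v _. destruct (inb v X) eqn:E; auto. apply H, inb_In; auto.
Qed.

Lemma ren_ok_ext_fv f g φ :
  (forall v, In v (fv φ) -> f v = g v) -> ren_ok f φ -> ren_ok g φ.
Proof.
  revert f g; induction φ as [P l| |a IHa b IHb|x a IH|t X a IH];
    intros f g H Hok; simpl in *; auto.
  - destruct Hok; split; [apply (IHa f g) | apply (IHb f g)]; auto;
      intros; apply H; apply in_app_iff; auto.
  - destruct Hok as [Hok1 Hok2]. split.
    + eapply IH; [|exact Hok1]. intros v Hv. unfold upd.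
      destruct (var_eqb v (BV x)) eqn:E; auto. apply H, filter_In. rewrite E; auto.
    + intros v Hv. rewrite <- H; auto.
  - destruct Hok as [Hok1 Hok2]. split.
    + eapply IH; [|exact Hok1]. intros v _. simpl.
      destruct (inb v X) eqn:E; auto. apply H, inb_In; auto.
    + intros v w Hv1 Hv2 Hw1 Hw2. rewrite <- H; auto.
Qed.

Definition conjugate (N : nat) (f : var -> var) : var -> var :=
  fun v => swap N (f (swap N v)).

Lemma conjugate_upd N f x : x < N -> conjugate N (upd f x) = upd (conjugate N f) x.
Proof.
  intro Hx. apply functional_extensionality. intro v. unfold conjugate, upd.
  rewrite var_eqb_swap; auto. destruct (var_eqb v (BV x)); auto.
  apply swap_involutive.
Qed.

Lemma conjugate_restrict N f X :
  conjugate N (fun v => if inb v X then f v else v) =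
  (fun v => if inb v (sortset (map (swap N) X)) then conjugate N f v else v).
Proof.
  apply functional_extensionality. intro v. unfold conjugate.
  rewrite inb_swap_set. destruct (inb (swap N v) X); auto. apply swap_involutive.
Qed.

Lemma conjugate_sub1 N x y : x < N -> conjugate N (sub1 x y) = sub1 x (swap N y).
Proof.
  intro Hx. apply functional_extensionality. intro v. unfold conjugate, sub1.
  rewrite var_eqb_swap; auto. destruct (var_eqb v (BV x)); auto.
  apply swap_involutive.
Qed.

Lemma swap_set_map N f X :
  sortset (map (swap N) (sortset (map f X))) =
  sortset (map (conjugate N f) (sortset (map (swap N) X))).
Proof.
  apply sorted_set_ext; try apply sortset_sorted.
  intro v. rewrite in_swap_set, !In_sortset, !in_map_iff. split.
  - intros [x [Hx1 Hx2]]. exists (swap N x). split.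
    + unfold conjugate. rewrite swap_involutive, Hx1, swap_involutive; auto.
    + apply in_swap_set. rewrite swap_involutive; auto.
  - intros [y [Hy1 Hy2]]. apply in_swap_set in Hy2. exists (swap N y). split; auto.
    unfold conjugate in Hy1. rewrite <- Hy1, swap_involutive; auto.
Qed.

Lemma swap_form_ren N f φ :
  below N φ -> swap_form N (ren f φ) = ren (conjugate N f) (swap_form N φ).
Proof.
  revert f; induction φ as [P l| |a IHa b IHb|x a IH|t X a IH]; intros f Hb;
    simpl in *.
  - f_equal. rewrite !map_map. apply map_ext. intro v.
    unfold conjugate. rewrite swap_involutive; auto.
  - auto.
  - destruct Hb. f_equal; auto.
  - destruct Hb. f_equal. rewrite IH, conjugate_upd; auto.
  - destruct Hb. f_equal; [apply swap_set_map|]. rewrite IH, conjugate_restrict; auto.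
Qed.

Lemma swap_form_ren_ok N f φ :
  below N φ -> ren_ok f φ -> ren_ok (conjugate N f) (swap_form N φ).
Proof.
  revert f; induction φ as [P l| |a IHa b IHb|x a IH|t X a IH];
    intros f Hb Hok; simpl in *; auto.
  - destruct Hb, Hok; split; auto.
  - destruct Hb as [Hx Hb], Hok as [Hok1 Hok2]. split.
    + rewrite <- conjugate_upd; auto.
    + intros v Hv Heq. apply (Hok2 (swap N v)).
      * apply (fv_swap_form N (All x a)); simpl; auto.
      * unfold conjugate in Heq. apply swap_eq in Heq. rewrite swap_low in Heq; auto.
  - destruct Hb as [HX Hb], Hok as [Hok1 Hok2]. split.
    + rewrite <- conjugate_restrict; auto.
    + intros v w Hv1 Hv2 Hw1 Hw2 Heq. apply in_swap_set in Hv1.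
      apply (fv_swap_form N a v Hb) in Hv2. apply (fv_swap_form N a w Hb) in Hw1.
      rewrite in_swap_set in Hw2.
      apply (Hok2 _ _ Hv1 Hv2 Hw1 Hw2). unfold conjugate in Heq.
      apply swap_eq in Heq; auto.
Qed.

(* ** Axioms are preserved by the swap *)

Lemma peval_swap_form N val φ :
  peval val (swap_form N φ) = peval (fun ψ => val (swap_form N ψ)) φ.
Proof. induction φ; simpl; auto. rewrite IHφ1, IHφ2; auto. Qed.

Lemma swap_form_axiom N φ : below N φ -> axiom φ -> axiom (swap_form N φ).
Proof.
  intros Hb Hax. destruct Hax as
    [φ Ht|x φ y Hok|x φ ψ Hx|t X y φ HyX Hyφ|t X y φ HyX|t X φ|t s X φ ψ
    |t s X φ|t s X φ|t X φ|t X x φ HxX|t X y φ HyX]; simpl in *.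
  - apply ax_taut. intro val. rewrite peval_swap_form. apply Ht.
  - destruct Hb as [[Hx Hb] _].
    rewrite swap_form_ren, conjugate_sub1 by auto. apply ax_inst.
    rewrite <- conjugate_sub1 by auto. apply swap_form_ren_ok; auto.
  - destruct Hb as [[Hx' [Hb1 _]] _]. apply ax_allimp.
    rewrite fv_swap_form, swap_low; auto.
  - destruct Hb as [[_ Hb] _]. rewrite swap_vins. apply ax_A2.
    + rewrite in_swap_set, swap_involutive; auto.
    + rewrite fv_swap_form, swap_involutive; auto.
  - rewrite swap_vins. apply ax_A3. rewrite in_swap_set, swap_involutive; auto.
  - apply ax_B1.
  - apply ax_B2.
  - apply ax_B3l.
  - apply ax_B3r.
  - apply ax_B4.
  - destruct Hb as [_ [_ [Hx _]]]. apply ax_B5. rewrite in_swap_set, swap_low; auto.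
  - destruct Hb as [[Hy _] _]. rewrite swap_vins, swap_low by auto. apply ax_Bb.
    rewrite in_swap_set, swap_low; auto.
Qed.

(* ** The permutation induced by a witness renaming *)

Fixpoint wit_source (P : nat -> bool) (τ : nat -> nat) (i k : nat) : option nat :=
  match i with
  | 0 => None
  | S i' => if P i' && Nat.eqb (τ i') k then Some i' else wit_source P τ i' k
  end.

Lemma wit_source_some P τ i k m :
  wit_source P τ i k = Some m -> m < i /\ P m = true /\ τ m = k.
Proof.
  induction i; simpl; [discriminate|].
  destruct (P i && Nat.eqb (τ i) k) eqn:E.
  - intro H; inversion H; subst. apply andb_true_iff in E.
    destruct E as [E1 E2]. apply Nat.eqb_eq in E2. auto.
  - intro H. destruct (IHi H) as [? [? ?]]. auto.
Qed.

Lemma wit_source_none P τ i k :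
  wit_source P τ i k = None -> forall m, m < i -> P m = true -> τ m <> k.
Proof.
  induction i; simpl; [lia|].
  destruct (P i && Nat.eqb (τ i) k) eqn:E; [discriminate|].
  intros H m Hm HP Ht. destruct (Nat.eq_dec m i) as [->|Hne].
  - rewrite HP in E. simpl in E. apply Nat.eqb_neq in E. auto.
  - apply (IHi H m); auto. lia.
Qed.

(* The involution of indices exchanging each selected n < N with N + τ n:
   on basic variables below N it acts as swap ∘ (witness renaming). *)
Definition wit_perm (N : nat) (P : nat -> bool) (τ : nat -> nat) (n : nat) : nat :=
  if Nat.ltb n N then (if P n then N + τ n else n)
  else match wit_source P τ N (n - N) with Some m => m | None => n end.

Lemma wit_perm_involutive N P τ (Hinj : forall m n, τ m = τ n -> m = n) n :
  wit_perm N P τ (wit_perm N P τ n) = n.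
Proof.
  unfold wit_perm at 2. destruct (Nat.ltb n N) eqn:E.
  - apply Nat.ltb_lt in E. unfold wit_perm. destruct (P n) eqn:EP.
    + destruct (Nat.ltb (N + τ n) N) eqn:E2; [apply Nat.ltb_lt in E2; lia|].
      replace (N + τ n - N) with (τ n) by lia.
      destruct (wit_source P τ N (τ n)) eqn:F.
      * apply wit_source_some in F. destruct F as [_ [_ F]]. auto.
      * exfalso. eapply wit_source_none; eauto.
    + apply Nat.ltb_lt in E. rewrite E, EP; auto.
  - apply Nat.ltb_ge in E. destruct (wit_source P τ N (n - N)) eqn:F.
    + destruct (wit_source_some _ _ _ _ _ F) as [H1 [H2 H3]]. unfold wit_perm.
      apply Nat.ltb_lt in H1. rewrite H1, H2. lia.
    + unfold wit_perm. apply Nat.ltb_ge in E. rewrite E, F; auto.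
Qed.

Lemma conjugate_wit_ren N P τ n :
  n < N -> conjugate N (wit_ren P τ) (BV n) = lift_ren (wit_perm N P τ) (BV n).
Proof.
  intro Hn. unfold conjugate, wit_perm. simpl.
  apply Nat.ltb_lt in Hn. rewrite Hn. simpl. destruct (P n); simpl.
  - destruct (Nat.ltb (N + τ n) N) eqn:E; [apply Nat.ltb_lt in E; lia|]. auto.
  - rewrite Hn; auto.
Qed.

(* Swapping a CS(V)-instance far enough out gives a CS-instance: it is a
   variant of the CS-formula it was obtained from. *)
Lemma swap_CSV_in_CS CS c ψ :
  is_CS CS -> variant_closed CS -> CSV CS c ψ ->
  exists N0, forall N, N0 <= N -> CS c (swap_form N ψ).
Proof.
  intros HCS Hvc [φ [P [τ [Hcs [Hinj [Hok ->]]]]]].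
  destruct (below_exists φ) as [N1 H1].
  destruct (below_exists (ren (wit_ren P τ) φ)) as [N2 H2].
  exists (max N1 N2). intros N HN.
  assert (Bφ : below N φ) by (apply (below_mono N1); auto; lia).
  assert (Bψ : below N (ren (wit_ren P τ) φ)) by (apply (below_mono N2); auto; lia).
  assert (Fφ : FmlJ φ) by apply (proj1 (HCS _ _ Hcs)).
  assert (Hfix : swap_form N φ = φ) by (apply swap_form_fix; auto).
  assert (Hagree : forall v, In v (fv φ) ->
            conjugate N (wit_ren P τ) v = lift_ren (wit_perm N P τ) v).
  { intros v Hv. pose proof (fv_below _ _ _ Bφ Hv) as Hvb.
    pose proof (fv_basic _ _ (proj2 Fφ) Hv) as Hvbas.
    destruct v as [n|n]; simpl in *; [apply conjugate_wit_ren; auto | tauto]. }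
  apply (Hvc c φ); auto.
  exists (wit_perm N P τ). split; [|split].
  - exists (wit_perm N P τ). split; intro; apply wit_perm_involutive; auto.
  - apply (ren_ok_ext_fv (conjugate N (wit_ren P τ))); auto.
    rewrite <- Hfix. apply swap_form_ren_ok; auto.
  - rewrite swap_form_ren, Hfix by auto. apply ren_ext_fv; auto.
Qed.

(* ** Translation of derivations *)

(* Every CS(V)-derivable formula has, for all sufficiently large N, a
   CS-derivable swap: axioms and CS(V)-instances are translated by the
   lemmas above, and the swap commutes with modus ponens and generalization. *)
Lemma swap_provable CS φ :
  is_CS CS -> variant_closed CS -> provCSV CS φ ->
  exists N0, forall N, N0 <= N -> provCS CS (swap_form N φ).
Proof.
  intros HCS Hvc. induction 1 as [φ _ Hax|c ψ Hc _|φ ψ _ [N1 H1] _ [N2 H2]|x φ _ [N H]].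
  - destruct (below_exists φ) as [N0 HN0]. exists N0. intros N HN.
    assert (Bφ : below N φ) by (apply (below_mono N0); auto).
    apply pr_ax; [apply swap_form_FmlJ | apply swap_form_axiom]; auto.
  - destruct (swap_CSV_in_CS CS c ψ HCS Hvc Hc) as [N0 HN0].
    destruct (below_exists ψ) as [N1 HN1].
    exists (max N0 N1). intros N HN. apply pr_cs; [apply HN0; lia|].
    apply (swap_form_FmlJ N (cs_formula c ψ)). simpl.
    split; [constructor | apply (below_mono N1); auto; lia].
  - exists (max N1 N2). intros N HN. apply (pr_mp _ _ (swap_form N φ)).
    + apply (H1 N). lia.
    + apply H2. lia.
  - exists N. intros M HM. apply pr_gen, H; auto.
Qed.

(* Theorem: CS(V) is conservative over CS for basic formulas.  Take N beyond
   both the translation threshold and the variables of φ; the swap of φ is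
   then CS-derivable and equal to φ. *)
Theorem mainTheorem9 (CS : nat -> form -> Prop)
  (HCS : is_CS CS) (Hvc : variant_closed CS)
  (φ : form) (Hφ : FmlJ φ) :
  provCSV CS φ -> provCS CS φ.
Proof.
  intro Hprov.
  destruct (swap_provable CS φ HCS Hvc Hprov) as [N0 Hswap].
  destruct (below_exists φ) as [N1 Hbelow].
  rewrite <- (swap_form_fix (max N0 N1) φ); auto.
  - apply Hswap. lia.
  - apply (below_mono N1); auto. lia.
Qed.
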